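(* Let $T$ be an infinite, locally finite tree (connected acyclic graph). Then $T$ has finite metric dimension if and only if the set of vertices of $T$ of degree at least three is finite.
   Context: $d$ denotes shortest-path distance. A vertex $x$ resolves $u,v$ if $d(u,x)\ne d(v,x)$; a set $S$ of vertices is a resolving set if every pair of distinct vertices is resolved by some vertex of $S$. The metric dimension $\beta(G)$ is the minimum cardinality of a resolving set if a finite one exists, and $\infty$ otherwise. *)

From Stdlib Require Import List Arith.
Import ListNotations.
Set Implicit Arguments.

Section Graphs.
Variable V : Type.
Variable adj : V -> V -> Prop.

Definition simple_graph : Prop :=
  (forall u v, adj u v -> adj v u) /\ (forall v, ~ adj v v).

Inductive Walk : V -> V -> nat -> Prop :=
| walk_nil : forall v, Walk v v 0
| walk_cons : forall u w v n, adj u w -> Walk w v n -> Walk u v (S n).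

Definition connected : Prop := forall u v, exists n, Walk u v n.

Fixpoint chain (l : list V) : Prop :=
  match l with
  | a :: ((b :: _) as t) => adj a b /\ chain t
  | _ => True
  end.

(* a cycle: at least 3 distinct vertices v0 ... vk, consecutive adjacent,
   and vk adjacent to v0 *)
Definition has_cycle : Prop :=
  exists (v0 : V) (l : list V),
    2 <= length l /\ NoDup (v0 :: l) /\ chain (v0 :: l) /\ adj (last l v0) v0.

Definition is_tree : Prop := simple_graph /\ connected /\ ~ has_cycle.

Definition locally_finite : Prop :=
  forall v, exists l : list V, forall w, adj v w -> In w l.

Definition infinite_type : Prop := ~ exists l : list V, forall v : V, In v l.

Definition is_dist (u v : V) (n : nat) : Prop :=
  Walk u v n /\ forall m, Walk u v m -> n <= m.

Definition resolves (x u v : V) : Prop :=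
  exists du dv, is_dist u x du /\ is_dist v x dv /\ du <> dv.

Definition resolving_set (S : list V) : Prop :=
  forall u v, u <> v -> exists x, In x S /\ resolves x u v.

Definition finite_metric_dimension : Prop := exists S : list V, resolving_set S.

Definition deg_ge3 (v : V) : Prop :=
  exists a b c, adj v a /\ adj v b /\ adj v c /\ a <> b /\ a <> c /\ b <> c.

Definition finitely_many_branch_vertices : Prop :=
  exists l : list V, forall v, deg_ge3 v -> In v l.
End Graphs.

(* Everything rests on two facts about distances d(-,s) to a vertex s of a
   tree: the distances at the two ends of an edge differ by exactly one, and
   every vertex x <> s has a unique neighbour closer to s.  Both follow from
   [cycle_around_ball]: a path outside the ball of radius n about s whose two
   ends are attached to the ball would close a cycle.

   (=>) If L resolves T and v has three neighbours, each pair of them is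
   resolved by a landmark towards which one of the pair points; two distinct
   neighbours p, q of v then point to landmarks s, t, and the branch at q
   containing t lies beyond v as seen from s, so d(v,s) <= d(t,s).  Hence
   every branch vertex lies in a ball of bounded radius about L, and such
   balls are finite by local finiteness.

   (<=) Take L = the neighbours of the branch vertices plus two distinct
   vertices.  If u <> v were unresolved, walking inwards from both ends of the
   u-v path yields a vertex m with two distinct neighbours a, b unresolved by
   L ([unresolved_fork]); this is impossible both when m is a branch vertex
   (a is a landmark) and when it is not (the landmark s <> m lies beyond a or
   b), see [fork_resolved]. *)

From Stdlib Require Import List Arith Lia Wf_nat Classical ClassicalEpsilon.
Import ListNotations.

Lemma last_cons {A : Type} (l : list A) a d : last (a :: l) d = last l a.
Proof.
  revert a d; induction l as [|b l IH]; intros a d; [reflexivity|].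
  change (last (b :: l) d = last (b :: l) a). now rewrite !IH.
Qed.

Lemma last_app {A : Type} (l1 l2 : list A) a : last (l1 ++ l2) a = last l2 (last l1 a).
Proof.
  revert a; induction l1 as [|b l1 IH]; intros a; [reflexivity|].
  change (last (b :: l1 ++ l2) a = last l2 (last (b :: l1) a)).
  now rewrite !last_cons, IH.
Qed.

Section Graph.
Variable V : Type.
Variable adj : V -> V -> Prop.

Lemma chain_app l1 l2 a :
  chain adj (a :: l1) -> chain adj (last l1 a :: l2) -> chain adj (a :: l1 ++ l2).
Proof.
  revert a; induction l1 as [|b l1 IH]; intros a C1 C2; [exact C2|].
  rewrite last_cons in C2. destruct C1 as [Hab C1]. split; [exact Hab|]. now apply IH.
Qed.

Lemma chain_suffix l1 l2 : chain adj (l1 ++ l2) -> chain adj l2.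
Proof.
  induction l1 as [|a l1 IH]; simpl; intros C; [exact C|].
  apply IH. destruct (l1 ++ l2) as [|b t]; [exact I|exact (proj2 C)].
Qed.

(* Every path contains a simple path with the same endpoints, using only its
   vertices; cycles are defined through simple paths. *)
Lemma simple_subpath l y :
  chain adj (y :: l) -> exists l', chain adj (y :: l') /\ last l' y = last l y /\
    NoDup (y :: l') /\ incl (y :: l') (y :: l).
Proof.
  revert y; induction l as [|h t IH]; intros y C0.
  - exists []. repeat split; [repeat constructor; auto | apply incl_refl].
  - destruct C0 as [Hyh Ct]. destruct (IH h Ct) as [l' [C [L [N I]]]]. rewrite last_cons.
    destruct (classic (In y (h :: l'))) as [Hin|Hnin].
    + (* y reappears later: cut out the loop *)
      destruct (in_split _ _ Hin) as [P1 [P2 E]]. exists P2. repeat split.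
      * apply (chain_suffix P1). rewrite <- E. exact C.
      * rewrite <- L, <- (last_cons l' h y), E, last_app, last_cons. reflexivity.
      * rewrite E in N. exact (NoDup_app_remove_l _ _ N).
      * intros x [Hx|Hx]; [now left|right].
        apply I. rewrite E. apply in_or_app. now right; right.
    + exists (h :: l'). repeat split; auto.
      * now rewrite last_cons.
      * now constructor.
      * intros x [Hx|Hx]; [now left|right; now apply I].
Qed.

Lemma walk_snoc u v n : Walk adj u v n -> forall w, adj v w -> Walk adj u w (S n).
Proof.
  induction 1; intros x Hx; econstructor; eauto using walk_nil.
Qed.

Hypothesis adj_sym : forall u v, adj u v -> adj v u.

Lemma walk_sym u v n : Walk adj u v n -> Walk adj v u n.
Proof.
  induction 1; [constructor | eapply walk_snoc; eauto].
Qed.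

Hypothesis conn : connected adj.

Lemma is_dist_exists u v : exists n, is_dist adj u v n.
Proof.
  destruct (dec_inh_nat_subset_has_unique_least_element (fun n => Walk adj u v n)
              (fun n => classic _) (conn u v)) as [n [[Hn Hmin] _]].
  now exists n.
Qed.

Definition dist u v : nat :=
  proj1_sig (constructive_indefinite_description _ (is_dist_exists u v)).

Lemma dist_spec u v : is_dist adj u v (dist u v).
Proof. unfold dist. now destruct constructive_indefinite_description. Qed.

Lemma dist_walk u v : Walk adj u v (dist u v).
Proof. apply dist_spec. Qed.

Lemma dist_le_walk u v n : Walk adj u v n -> dist u v <= n.
Proof. apply dist_spec. Qed.

Lemma is_dist_dist u v n : is_dist adj u v n -> n = dist u v.
Proof.
  intros [W Hmin]. pose proof (dist_le_walk _ _ _ W). pose proof (Hmin _ (dist_walk u v)). lia.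
Qed.

Lemma dist_refl u : dist u u = 0.
Proof. pose proof (dist_le_walk u u 0 (walk_nil _ _)). lia. Qed.

Lemma dist_eq0 u v : dist u v = 0 -> u = v.
Proof. intros E. pose proof (dist_walk u v) as W. rewrite E in W. now inversion W. Qed.

Lemma dist_sym u v : dist u v = dist v u.
Proof.
  pose proof (dist_le_walk _ _ _ (walk_sym _ _ _ (dist_walk u v))).
  pose proof (dist_le_walk _ _ _ (walk_sym _ _ _ (dist_walk v u))). lia.
Qed.

Lemma dist_adj_le x y s : adj x y -> dist x s <= S (dist y s).
Proof. intros H. apply dist_le_walk. econstructor; eauto using dist_walk. Qed.

Lemma dist_step u s : u <> s -> exists y, adj u y /\ S (dist y s) = dist u s.
Proof.
  intros Hne. pose proof (dist_walk u s) as W. remember (dist u s) as n eqn:En.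
  destruct W as [|u w v n Huw W]; [congruence|].
  exists w. split; [exact Huw|].
  pose proof (dist_le_walk _ _ _ W). pose proof (dist_adj_le _ _ v Huw). lia.
Qed.

Lemma resolves_iff x u v : resolves adj x u v <-> dist u x <> dist v x.
Proof.
  split.
  - intros [du [dv [H1 [H2 H3]]]].
    now rewrite (is_dist_dist _ _ _ H1), (is_dist_dist _ _ _ H2) in H3.
  - intros H. exists (dist u x), (dist v x). repeat split; auto; apply dist_spec.
Qed.

Lemma path_to_centre s k w : dist w s = k ->
  exists l, chain adj (w :: l) /\ last l w = s /\ Forall (fun v => dist v s <= k) (w :: l).
Proof.
  revert w; induction k as [|k IH]; intros w Hw.
  - apply dist_eq0 in Hw; subst. exists []. repeat constructor. rewrite dist_refl; lia.
  - assert (Hws : w <> s) by (intros ->; rewrite dist_refl in Hw; discriminate).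
    destruct (dist_step w s Hws) as [y [Hy Ey]].
    destruct (IH y ltac:(lia)) as [l [C [L F]]].
    exists (y :: l). split; [split; auto|split; [now rewrite last_cons|]].
    constructor; [lia|]. eapply Forall_impl; [|exact F]. simpl; intros; lia.
Qed.

Lemma path_from_centre s k w : dist w s = k ->
  exists l, chain adj (s :: l) /\ last l s = w /\ Forall (fun v => dist v s <= k) (s :: l).
Proof.
  revert w; induction k as [|k IH]; intros w Hw.
  - apply dist_eq0 in Hw; subst. exists []. repeat constructor. rewrite dist_refl; lia.
  - assert (Hws : w <> s) by (intros ->; rewrite dist_refl in Hw; discriminate).
    destruct (dist_step w s Hws) as [y [Hy Ey]].
    destruct (IH y ltac:(lia)) as [l [C [L F]]].
    exists (l ++ [w]). split; [|split; [apply last_last|]].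
    + apply chain_app; [exact C|]. rewrite L. simpl; auto.
    + change (Forall (fun v => dist v s <= S k) ((s :: l) ++ [w])).
      apply Forall_app. split; [|constructor; [lia|constructor]].
      eapply Forall_impl; [|exact F]. simpl; intros; lia.
Qed.

Lemma ball_path s n y z : dist y s <= n -> dist z s <= n ->
  exists l, chain adj (y :: l) /\ last l y = z /\ NoDup (y :: l) /\
    Forall (fun v => dist v s <= n) (y :: l).
Proof.
  intros Hy Hz.
  destruct (path_to_centre s _ y eq_refl) as [l1 [C1 [L1 F1]]].
  destruct (path_from_centre s _ z eq_refl) as [l2 [C2 [L2 F2]]].
  assert (C : chain adj (y :: l1 ++ l2)) by (apply chain_app; rewrite ?L1; auto).
  destruct (simple_subpath _ _ C) as [l [Cl [Ll [Nl Il]]]].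
  exists l. repeat split; auto.
  - now rewrite Ll, last_app, L1.
  - rewrite Forall_forall in F1, F2 |- *. intros x Hx.
    apply Il in Hx. change (In x ((y :: l1) ++ l2)) in Hx.
    apply in_app_or in Hx as [Hx|Hx].
    + specialize (F1 x Hx). lia.
    + specialize (F2 x (or_intror Hx)). lia.
Qed.

Section Tree.
Hypothesis adj_irrefl : forall v, ~ adj v v.
Hypothesis acyclic : ~ has_cycle adj.

(* A simple path lying outside the ball of radius n about s cannot have both
   ends attached to the ball (unless it is a single vertex attached twice at
   the same point): joining the ends inside the ball would close a cycle. *)
Lemma cycle_around_ball s n x P x' y' :
  NoDup (x :: P) -> chain adj (x :: P) -> Forall (fun v => n < dist v s) (x :: P) ->
  adj x x' -> adj (last P x) y' -> dist x' s <= n -> dist y' s <= n ->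
  (P = [] -> x' <> y') -> False.
Proof.
  intros Nd C Out Hx Hy Hx' Hy' Hne.
  destruct (ball_path s n y' x' Hy' Hx') as [l [Cl [Ll [Nl Inside]]]].
  apply acyclic. exists x, (P ++ y' :: l). split; [|split; [|split]].
  - destruct P as [|p P]; [destruct l as [|w l]|].
    + exfalso. exact (Hne eq_refl (eq_sym Ll)).
    + simpl; lia.
    + rewrite length_app; simpl; lia.
  - change (NoDup ((x :: P) ++ y' :: l)). apply NoDup_app; auto.
    rewrite Forall_forall in Out, Inside. intros w Hw Hw'.
    specialize (Out w Hw). specialize (Inside w Hw'). lia.
  - apply chain_app; [exact C|]. split; assumption.
  - rewrite last_app, last_cons, Ll. now apply adj_sym.
Qed.

Lemma adj_dist_neq s x y : adj x y -> dist x s <> dist y s.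
Proof.
  intros Hxy E. destruct (classic (x = s)) as [->|Hxs].
  - rewrite dist_refl in E. apply eq_sym, dist_eq0 in E. subst. exact (adj_irrefl _ Hxy).
  - assert (Hys : y <> s) by (intros ->; rewrite dist_refl in E; now apply Hxs, dist_eq0).
    destruct (dist_step x s Hxs) as [x' [Hx' Ex']].
    destruct (dist_step y s Hys) as [y' [Hy' Ey']].
    apply (cycle_around_ball s (dist x' s) x [y] x' y'); simpl; auto; try lia.
    + constructor; [intros [->|[]]; exact (adj_irrefl _ Hxy)|repeat constructor; auto].
    + repeat constructor; lia.
    + discriminate.
Qed.

Lemma dist_adj_cases s x y : adj x y -> S (dist y s) = dist x s \/ dist y s = S (dist x s).
Proof.
  intros Hxy. pose proof (adj_dist_neq s x y Hxy).
  pose proof (dist_adj_le x y s Hxy). pose proof (dist_adj_le y x s (adj_sym _ _ Hxy)). lia.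
Qed.

Lemma toward_unique s x y z : adj x y -> adj x z ->
  S (dist y s) = dist x s -> S (dist z s) = dist x s -> y = z.
Proof.
  intros Hy Hz Ey Ez. apply NNPP. intros Hyz.
  apply (cycle_around_ball s (dist y s) x [] y z); simpl; auto; try lia.
  - repeat constructor; auto.
  - repeat constructor; lia.
Qed.

(* If the edge xy points away from s but towards t, then t lies behind y as
   seen from s, so the geodesic from t to s passes through y and x. *)
Lemma dist_beyond_edge s t x y : adj x y ->
  dist y s = S (dist x s) -> S (dist y t) = dist x t -> dist x s + dist y t + 1 <= dist t s.
Proof.
  remember (dist y t) as n eqn:En. revert x y En.
  induction n as [|n IH]; intros x y En Hxy Es Et.
  - apply eq_sym, dist_eq0 in En. subst. lia.
  - assert (Hyt : y <> t) by (intros ->; rewrite dist_refl in En; discriminate).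
    destruct (dist_step y t Hyt) as [z [Hz Ez]].
    assert (Hzs : dist z s = S (dist y s)).
    { destruct (dist_adj_cases s y z Hz) as [Hc|Hc]; auto.
      assert (z = x) by (apply (toward_unique s y z x); auto; lia). subst. lia. }
    pose proof (IH y z ltac:(lia) Hz Hzs ltac:(lia)). lia.
Qed.

Lemma resolving_neighbours_toward L v a b : resolving_set adj L ->
  adj v a -> adj v b -> a <> b ->
  exists s, In s L /\ (S (dist a s) = dist v s \/ S (dist b s) = dist v s).
Proof.
  intros HL Ha Hb Hab. destruct (HL a b Hab) as [s [Hs R]].
  apply resolves_iff in R. exists s. split; [exact Hs|].
  destruct (dist_adj_cases s v a Ha); destruct (dist_adj_cases s v b Hb); lia.
Qed.

Lemma two_directions_bound v p q s t : adj v p -> adj v q -> p <> q ->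
  S (dist p s) = dist v s -> S (dist q t) = dist v t -> dist v s <= dist t s.
Proof.
  intros Hp Hq Hpq Ep Eq.
  assert (Hqs : dist q s = S (dist v s)).
  { destruct (dist_adj_cases s v q Hq) as [Hc|Hc]; auto.
    exfalso. apply Hpq. now apply (toward_unique s v p q). }
  pose proof (dist_beyond_edge s t v q Hq Hqs Eq). lia.
Qed.

Lemma branch_vertex_near L v : resolving_set adj L -> deg_ge3 adj v ->
  exists s t, In s L /\ In t L /\ dist v s <= dist t s.
Proof.
  intros HL [a [b [c [Ha [Hb [Hc [Hab [Hac Hbc]]]]]]]].
  destruct (resolving_neighbours_toward L v a b HL Ha Hb Hab) as [s1 [I1 [T1|T1]]];
  [destruct (resolving_neighbours_toward L v b c HL Hb Hc Hbc) as [s3 [I3 [T3|T3]]]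
  |destruct (resolving_neighbours_toward L v a c HL Ha Hc Hac) as [s2 [I2 [T2|T2]]]].
  - exists s1, s3. repeat split; auto. now apply (two_directions_bound v a b).
  - exists s1, s3. repeat split; auto. now apply (two_directions_bound v a c).
  - exists s1, s2. repeat split; auto. now apply (two_directions_bound v b a).
  - exists s1, s2. repeat split; auto. now apply (two_directions_bound v b c).
Qed.

(* If u <> v are at equal distance from every landmark, then so are two
   distinct neighbours a, b of some vertex m (the middle of the u-v path):
   the first steps from u and from v inwards point towards every landmark. *)
Lemma unresolved_fork (L : list V) s0 u v : In s0 L -> u <> v ->
  (forall s, In s L -> dist u s = dist v s) ->
  exists m a b, adj m a /\ adj m b /\ a <> b /\ forall s, In s L -> dist a s = dist b s.
Proof.
  intros Hs0. remember (dist u v) as k eqn:Ek. revert u v Ek.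
  induction k as [k IH] using lt_wf_ind; intros u v Ek Huv Heq.
  destruct (dist_step u v Huv) as [u' [Hu' Eu']].
  destruct (classic (u' = v)) as [->|Hu'v].
  { exfalso. exact (adj_dist_neq s0 u v Hu' (Heq s0 Hs0)). }
  destruct (dist_step u' v Hu'v) as [w [Hw Ew]].
  destruct (classic (w = v)) as [->|Hwv].
  { exists u', u, v. repeat split; auto. }
  destruct (dist_step v u' (not_eq_sym Hu'v)) as [v' [Hv' Ev']].
  assert (Hwv1 : 1 <= dist w v) by (destruct (dist w v) eqn:E; [now apply dist_eq0 in E|lia]).
  pose proof (dist_sym v u'). pose proof (dist_sym u' v').
  assert (Hto : forall s, In s L -> S (dist u' s) = dist u s).
  { intros s Hs. destruct (dist_adj_cases s u u' Hu') as [Hc|Hc]; auto.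
    pose proof (dist_beyond_edge s v u u' Hu' Hc Eu'). specialize (Heq s Hs). lia. }
  assert (Hto' : forall s, In s L -> S (dist v' s) = dist v s).
  { intros s Hs. destruct (dist_adj_cases s v v' Hv') as [Hc|Hc]; auto.
    pose proof (dist_beyond_edge s u' v v' Hv' Hc Ev').
    specialize (Heq s Hs). specialize (Hto s Hs). lia. }
  apply (IH (dist u' v') ltac:(lia) u' v' eq_refl).
  - intros E. subst v'. rewrite dist_refl in *. lia.
  - intros s Hs. specialize (Hto s Hs). specialize (Hto' s Hs). specialize (Heq s Hs). lia.
Qed.

Lemma fork_resolved (L : list V) m a b : adj m a -> adj m b -> a <> b ->
  (deg_ge3 adj m -> In a L) -> (exists s, In s L /\ s <> m) ->
  exists s, In s L /\ dist a s <> dist b s.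
Proof.
  intros Ha Hb Hab Hbranch [s [Hs Hsm]].
  destruct (classic (deg_ge3 adj m)) as [Hd|Hd].
  { exists a. split; [now apply Hbranch|]. rewrite dist_refl.
    intros E. apply Hab, eq_sym, dist_eq0. auto. }
  exists s. split; [exact Hs|].
  destruct (dist_step m s (not_eq_sym Hsm)) as [c [Hc Ec]].
  destruct (classic (c = a)) as [->|Hca]; [|destruct (classic (c = b)) as [->|Hcb]].
  - destruct (dist_adj_cases s m b Hb) as [E|E]; [|lia].
    exfalso. apply Hab. now apply (toward_unique s m a b).
  - destruct (dist_adj_cases s m a Ha) as [E|E]; [|lia].
    exfalso. apply Hab. now apply (toward_unique s m a b).
  - exfalso. apply Hd. exists a, b, c. repeat split; auto.
Qed.

Section LocallyFinite.
Hypothesis loc_fin : locally_finite adj.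

Lemma neighbours_list (l : list V) : exists l', forall w v, In w l -> adj w v -> In v l'.
Proof.
  induction l as [|a l [l' IH]].
  - exists []. intros w v [].
  - destruct (loc_fin a) as [la Ha]. exists (la ++ l').
    intros w v [<-|Hw] Hwv; apply in_or_app; [left|right]; eauto.
Qed.

Lemma ball_finite s n : exists l, forall v, dist v s <= n -> In v l.
Proof.
  induction n as [|n [l IH]].
  - exists [s]. intros v Hv. left. symmetry. apply dist_eq0. lia.
  - destruct (neighbours_list l) as [l' Hl']. exists (l ++ l').
    intros v Hv. apply in_or_app.
    destruct (le_lt_dec (dist v s) n) as [Hle|Hlt]; [left; auto|right].
    assert (Hvs : v <> s) by (intros ->; rewrite dist_refl in Hlt; lia).
    destruct (dist_step v s Hvs) as [y [Hy Ey]].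
    apply (Hl' y v); [apply IH; lia|now apply adj_sym].
Qed.

Lemma balls_finite M (L : list V) : exists B, forall s v, In s L -> dist v s <= M -> In v B.
Proof.
  induction L as [|a L [B IH]].
  - exists []. intros s v [].
  - destruct (ball_finite a M) as [la Ha]. exists (la ++ B).
    intros s v [<-|Hs] Hv; apply in_or_app; [left|right]; eauto.
Qed.

Lemma landmark_distances_bounded (L : list V) :
  exists M, forall s t, In s L -> In t L -> dist t s <= M.
Proof.
  set (ds := map (fun p => dist (snd p) (fst p)) (list_prod L L)).
  exists (list_max ds). intros s t Hs Ht.
  pose proof (proj1 (list_max_le ds _) (le_n _)) as Hmax. rewrite Forall_forall in Hmax.
  apply Hmax, in_map_iff. exists (s, t). split; [reflexivity|now apply in_prod].
Qed.

Lemma finite_dimension_few_branches :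
  finite_metric_dimension adj -> finitely_many_branch_vertices adj.
Proof.
  intros [L HL].
  destruct (landmark_distances_bounded L) as [M HM].
  destruct (balls_finite M L) as [B HB].
  exists B. intros v Hv.
  destruct (branch_vertex_near L v HL Hv) as [s [t [Hs [Ht Hd]]]].
  apply (HB s v Hs). specialize (HM s t Hs Ht). lia.
Qed.

Lemma two_distinct_vertices : infinite_type V -> exists x y : V, x <> y.
Proof.
  intros Hinf. apply NNPP. intros Hno. apply Hinf.
  destruct (classic (exists x : V, True)) as [[x _]|Hempty].
  - exists [x]. intros v. left. apply NNPP. intros Hxv. apply Hno. now exists x, v.
  - exists []. intros v. apply Hempty. now exists v.
Qed.

Lemma few_branches_finite_dimension : infinite_type V ->
  finitely_many_branch_vertices adj -> finite_metric_dimension adj.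
Proof.
  intros Hinf [B HB].
  destruct (two_distinct_vertices Hinf) as [x [y Hxy]].
  destruct (neighbours_list B) as [NB HNB].
  set (L := NB ++ [x; y]).
  assert (Hx : In x L) by (apply in_or_app; right; left; reflexivity).
  assert (Hy : In y L) by (apply in_or_app; right; right; left; reflexivity).
  exists L. intros u v Huv.
  apply NNPP. intros Hno.
  assert (Heq : forall s, In s L -> dist u s = dist v s).
  { intros s Hs. apply NNPP. intros Hne. apply Hno. exists s. now rewrite resolves_iff. }
  destruct (unresolved_fork L x u v Hx Huv Heq) as [m [a [b [Ha [Hb [Hab Hmab]]]]]].
  destruct (fork_resolved L m a b Ha Hb Hab) as [s [Hs Hres]].
  - intros Hm. apply in_or_app. left. apply (HNB m a); auto.
  - destruct (classic (x = m)) as [<-|Hxm]; [exists y; auto | exists x; auto].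
  - exact (Hres (Hmab s Hs)).
Qed.

End LocallyFinite.
End Tree.
End Graph.

Theorem theorem3 (V : Type) (adj : V -> V -> Prop) :
  is_tree adj -> locally_finite adj -> infinite_type V ->
  (finite_metric_dimension adj <-> finitely_many_branch_vertices adj).
Proof.
  intros [[Hsym Hirr] [Hconn Hacyc]] Hlf Hinf. split.
  - exact (finite_dimension_few_branches V adj Hsym Hconn Hirr Hacyc Hlf).
  - exact (few_branches_finite_dimension V adj Hsym Hconn Hirr Hacyc Hlf Hinf).
Qed.
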